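(* Let $\eta > 0$, let $\mathbf{a} \in \mathbb{R}_+^n$, $\mathbf{b} \in \mathbb{R}_+^m$ with $\mathbf{1}_n^\top\mathbf{a} = \mathbf{1}_m^\top\mathbf{b} = 1$, let $\mathcal{D} = U(\mu,\nu) = \{\boldsymbol{\Pi} \in \mathbb{R}_+^{n\times m} : \boldsymbol{\Pi}\mathbf{1}_m = \mathbf{a},\ \boldsymbol{\Pi}^\top\mathbf{1}_n = \mathbf{b}\}$, and let $\mathbf{C}_1,\ldots,\mathbf{C}_L \in \mathbb{R}^{n\times m}$. Let $$G_\eta(\boldsymbol{\Pi}) = \eta \log\left( \sum_{\ell=1}^L \exp\left( \tfrac{1}{\eta}\langle \boldsymbol{\Pi}, \mathbf{C}_\ell \rangle \right) \right)$$ and let $\boldsymbol{\Pi}^\ast \in \arg\min_{\boldsymbol{\Pi}\in\mathcal{D}} G_\eta(\boldsymbol{\Pi})$. Consider the Frank--Wolfe iteration: start from $\boldsymbol{\Pi}^{(0)} \in \mathcal{D}$, and for $t = 0, 1, 2, \ldots$ set $$\alpha_\ell^{(t)} = \frac{\exp\left(\frac{1}{\eta}\langle \boldsymbol{\Pi}^{(t)}, \mathbf{C}_\ell\rangle\right)}{\sum_{\ell'=1}^L \exp\left(\frac{1}{\eta}\langle \boldsymbol{\Pi}^{(t)}, \mathbf{C}_{\ell'}\rangle\right)}, \qquad \mathbf{M}_{\boldsymbol{\Pi}^{(t)}} = \sum_{\ell=1}^L \alpha_\ell^{(t)} \mathbf{C}_\ell = \nabla G_\eta(\boldsymbol{\Pi}^{(t)}),$$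 let $\gamma_t = 2/(t+2)$, let $\widehat{\boldsymbol{\Pi}} \in \mathcal{D}$ be an approximate solution of the linear subproblem $\min_{\boldsymbol{\Pi}\in\mathcal{D}} \langle \boldsymbol{\Pi}, \mathbf{M}_{\boldsymbol{\Pi}^{(t)}}\rangle$ with accuracy $\delta \geq 0$, i.e. $\langle \widehat{\boldsymbol{\Pi}}, \mathbf{M}_{\boldsymbol{\Pi}^{(t)}}\rangle \leq \min_{\boldsymbol{\Pi}\in\mathcal{D}} \langle \boldsymbol{\Pi}, \mathbf{M}_{\boldsymbol{\Pi}^{(t)}}\rangle + \tfrac{1}{2}\delta\gamma_t C_f$, and set $\boldsymbol{\Pi}^{(t+1)} = (1-\gamma_t)\boldsymbol{\Pi}^{(t)} + \gamma_t \widehat{\boldsymbol{\Pi}}$. Then for each $t \geq 1$, $$G_\eta(\boldsymbol{\Pi}^{(t)}) - G_\eta(\boldsymbol{\Pi}^\ast) \leq \frac{4\sigma_{\max}(\boldsymbol{\Phi}^\top\boldsymbol{\Phi})}{\eta(t+2)}(1+\delta),$$ where $\boldsymbol{\Phi} = (\mathrm{vec}(\mathbf{C}_1), \ldots, \mathrm{vec}(\mathbf{C}_L))$ (the matrix whose columns are the vectorized cost matrices) and $\sigma_{\max}(\boldsymbol{\Phi}^\top\boldsymbol{\Phi})$ is the largest eigenvalue of $\boldsymbol{\Phi}^\top\boldsymbol{\Phi}$.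
   Context: $\langle \mathbf{A}, \mathbf{B}\rangle = \sum_{i,j}A_{ij}B_{ij}$. $C_f$ denotes the curvature constant of $f = G_\eta$ on $\mathcal{D}$: $C_f = \sup \frac{2}{\gamma^2}\big(f(\boldsymbol{\Pi}') - f(\boldsymbol{\Pi}) - \langle \boldsymbol{\Pi}'-\boldsymbol{\Pi}, \nabla f(\boldsymbol{\Pi})\rangle\big)$ over $\boldsymbol{\Pi}, \widehat{\boldsymbol{\Pi}} \in \mathcal{D}$, $\gamma\in[0,1]$, $\boldsymbol{\Pi}' = \boldsymbol{\Pi} + \gamma(\widehat{\boldsymbol{\Pi}} - \boldsymbol{\Pi})$. The accuracy parameter $\delta$ is in the sense of Jaggi's approximate linear-minimization oracle for Frank--Wolfe (in practice the subproblem may be solved exactly by linear programming or approximately by the entropic-regularized Sinkhorn algorithm). *)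

From HB Require Import structures.
From mathcomp Require Import all_boot all_order all_algebra.
From mathcomp Require Import all_classical all_reals.
From mathcomp Require Import all_analysis.
Set Implicit Arguments. Unset Strict Implicit. Unset Printing Implicit Defensive.
Import Order.TTheory GRing.Theory Num.Theory.
Local Open Scope ring_scope.
Local Open Scope classical_set_scope.

Section OTDefs.
Variables (R : realType) (n m L : nat).

Definition frob (A B : 'M[R]_(n, m)) : R := \sum_(i < n) \sum_(j < m) A i j * B i j.

Definition transport_polytope (a : 'cV[R]_n) (b : 'cV[R]_m) : set 'M[R]_(n, m) :=
  [set P : 'M[R]_(n, m) | (forall i j, 0 <= P i j) /\ P *m const_mx 1 = a /\ P^T *m const_mx 1 = b].

Definition G_eta (eta : R) (C : 'I_L -> 'M[R]_(n, m)) (P : 'M[R]_(n, m)) : R :=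
  eta * ln (\sum_(l < L) expR (frob P (C l) / eta)).

Definition alpha_w (eta : R) (C : 'I_L -> 'M[R]_(n, m)) (P : 'M[R]_(n, m)) (l : 'I_L) : R :=
  expR (frob P (C l) / eta) / \sum_(l' < L) expR (frob P (C l') / eta).

Definition M_grad (eta : R) (C : 'I_L -> 'M[R]_(n, m)) (P : 'M[R]_(n, m)) : 'M[R]_(n, m) :=
  \sum_(l < L) alpha_w eta C P l *: C l.

(* Curvature constant C_f of f = G_eta on D (Jaggi), gamma in (0,1]. *)
Definition curvature_const (eta : R) (C : 'I_L -> 'M[R]_(n, m)) (D : set 'M[R]_(n, m)) : R :=
  sup [set x : R | exists P Ph (g : R), [/\ D P, D Ph, 0 < g, g <= 1 &
         x = 2 / g ^+ 2 * (G_eta eta C (P + g *: (Ph - P)) - G_eta eta C P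
                           - frob (P + g *: (Ph - P) - P) (M_grad eta C P))]].

Definition Phi_mx (C : 'I_L -> 'M[R]_(n, m)) : 'M[R]_(n * m, L) :=
  \matrix_(k, l) (mxvec (C l)) 0 k.

Definition largest_eigenvalue (A : 'M[R]_L) (lam : R) : Prop :=
  eigenvalue A lam /\ (forall mu : R, eigenvalue A mu -> mu <= lam).

End OTDefs.

From HB Require Import structures.
From mathcomp Require Import all_boot all_order all_algebra.
From mathcomp Require Import all_classical all_reals.
From mathcomp Require Import all_analysis.
From mathcomp Require Import complex.
From mathcomp Require Import ring lra.
Set Implicit Arguments. Unset Strict Implicit. Unset Printing Implicit Defensive.
Import Order.TTheory GRing.Theory Num.Theory.
Local Open Scope ring_scope.

(* The objective is G_eta = eta * lse(<., C_l> / eta), and lse is convex with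
   gradient softmax.  Along a line its second derivative is the softmax variance
   of the directional scores, bounded by their sum of squares, so
   G_eta(Q) - G_eta(P) - <Q - P, M_P> <= |Phi^T vec(Q - P)|^2 / (2 eta)
   <= sigma_max |Q - P|^2 / (2 eta) by the Rayleigh bound.  As the transport
   polytope has squared diameter at most 2, Jaggi's curvature constant satisfies
   C_f <= 2 sigma_max / eta.  Convexity and the delta-approximate oracle give
   h_(t+1) <= (1 - g_t) h_t + g_t^2 C_f (1 + delta) / 2 with g_t = 2/(t+2) for
   the primal gap h_t, and the usual induction yields h_t <= 2 C_f (1 + delta) / (t+2). *)

(* The spectral theorem is available for hermitian matrices over R[i]. *)
Section Rayleigh.
Local Open Scope sesquilinear_scope.
Variables (R : rcfType) (L : nat) (A : 'M[R]_L) (lam : R).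
Hypothesis A_sym : A^T = A.
Hypothesis eigenvalue_le : forall mu, eigenvalue A mu -> mu <= lam.

Local Notation toC := (real_complex R).
Local Notation AC := (map_mx toC A).

Let conj_toC (r : R) : (toC r)^* = toC r.
Proof. by apply/conj_Creal/complex_realP; exists r. Qed.

Let AC_herm : AC \is hermsymmx.
Proof.
apply/is_hermitianmxP; rewrite expr0 scale1r.
by apply/matrixP => i j; rewrite !mxE conj_toC -[in LHS]A_sym mxE.
Qed.

Lemma spectral_diag_real_le i : spectral_diag AC 0 i <= toC lam.
Proof.
have /orthomx_spectralP AE := hermitian_normalmx AC_herm.
set P := spectralmx AC in AE; set X := spectral_diag AC in AE *.
have PA : P *m AC = diag_mx X *m P by rewrite {1}AE !mulmxA mulmxV ?spectral_unit // mul1mx.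
have eigX : eigenvalue AC (X 0 i).
  apply/eigenvalueP; exists (row i P).
    by rewrite -row_mul PA row_mul row_diag_mx -scalemxAl -rowE.
  apply/negP => /eqP /(congr1 (fun v => v *m P^t*)).
  rewrite -row_mul (unitarymxP (spectral_unitarymx AC)) mul0mx => /rowP /(_ i).
  by rewrite !mxE eqxx => /eqP; rewrite oner_eq0.
have /complex_realP [r Xr] : X 0 i \is Num.real.
  exact/(mxOverP (hermitian_spectral_diag_real AC_herm)).
move: eigX; rewrite Xr lecR eigenvalue_root_char -map_char_poly fmorph_root.
by rewrite -eigenvalue_root_char; apply: eigenvalue_le.
Qed.

Lemma rayleigh_le (x : 'rV[R]_L) : (x *m A *m x^T) 0 0 <= lam * (x *m x^T) 0 0.
Proof.
have /orthomx_spectralP AE := hermitian_normalmx AC_herm.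
set P := spectralmx AC in AE; set X := spectral_diag AC in AE.
set xC := map_mx toC x; set y := xC *m P^t*.
have xC_adj : xC^t* = map_mx toC x^T by apply/matrixP => i j; rewrite !mxE conj_toC.
have y_adj : P *m xC^t* = y^t* by rewrite /y trmx_mul map_mxM /= trmxCK.
have quadA : toC ((x *m A *m x^T) 0 0) = (y *m diag_mx X *m y^t*) 0 0.
  have -> : y *m diag_mx X *m y^t* = xC *m AC *m xC^t*.
    by rewrite AE invmx_unitary ?spectral_unitarymx // -y_adj !mulmxA.
  by rewrite xC_adj -!map_mxM [RHS]mxE.
have quadI : toC ((x *m x^T) 0 0) = (y *m y^t*) 0 0.
  have -> : y *m y^t* = xC *m xC^t*.
    by rewrite -y_adj mulmxA -(mulmxA xC) (mulmx1C (unitarymxP (spectral_unitarymx AC))) mulmx1.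
  by rewrite xC_adj -map_mxM [RHS]mxE.
rewrite -lecR rmorphM /= quadA quadI !mxE mulr_sumr; apply: ler_sum => i _.
rewrite mul_mx_diag !mxE mulrAC [X in X <= _]mulrC.
by apply: ler_wpM2r; [exact: mul_conjC_ge0 | exact: spectral_diag_real_le].
Qed.

End Rayleigh.

Section Frobenius.
Variables (R : realType) (n m : nat).
Implicit Types A B : 'M[R]_(n, m).

Lemma frobBl A B D : frob (A - B) D = frob A D - frob B D.
Proof.
rewrite /frob -sumrB; apply: eq_bigr => i _; rewrite -sumrB.
by apply: eq_bigr => j _; rewrite !mxE mulrBl.
Qed.

Lemma frobZl k A D : frob (k *: A) D = k * frob A D.
Proof.
rewrite /frob mulr_sumr; apply: eq_bigr => i _; rewrite mulr_sumr.
by apply: eq_bigr => j _; rewrite mxE mulrA.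
Qed.

Lemma frob_sumr L A (w : 'I_L -> R) (D : 'I_L -> 'M[R]_(n, m)) :
  frob A (\sum_(l < L) w l *: D l) = \sum_(l < L) w l * frob A (D l).
Proof.
rewrite /frob; under [RHS]eq_bigr do rewrite mulr_sumr.
rewrite [RHS]exchange_big /=; apply: eq_bigr => i _.
under [RHS]eq_bigr do rewrite mulr_sumr.
rewrite [RHS]exchange_big /=; apply: eq_bigr => j _.
rewrite summxE mulr_sumr; apply: eq_bigr => l _.
by rewrite mxE mulrCA.
Qed.

Lemma frob_mxvec A B : frob A B = \sum_(k < n * m) mxvec A 0 k * mxvec B 0 k.
Proof.
rewrite /frob pair_big [RHS](reindex (uncurry (@mxvec_index n m))) /=; last exact: curry_mxvec_bij.
by apply: eq_bigr => -[i j] _; rewrite !mxvecE.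
Qed.

Lemma frob_self_ge0 A : 0 <= frob A A.
Proof. by apply: sumr_ge0 => i _; apply: sumr_ge0 => j _; rewrite -expr2 sqr_ge0. Qed.

End Frobenius.

Lemma cauchy_schwarz (R : realFieldType) N (u v : 'I_N -> R) :
  (\sum_(k < N) u k * v k) ^+ 2 <= (\sum_(k < N) u k ^+ 2) * (\sum_(k < N) v k ^+ 2).
Proof.
set uv := \sum_k _; set uu := \sum_k _; set vv := \sum_k _.
have vv_ge0 : 0 <= vv by apply: sumr_ge0 => k _; apply: sqr_ge0.
have [vv0|vv_neq0] := eqVneq vv 0.
  have v0 k : v k = 0.
    apply/eqP; rewrite -sqrf_eq0; apply/eqP.
    by apply: (psumr_eq0P _ vv0) => // k' _; apply: sqr_ge0.
  have -> : uv = 0 by rewrite /uv big1 // => k _; rewrite v0 mulr0.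
  by rewrite vv0 mulr0 expr0n.
have vv_gt0 : 0 < vv by rewrite lt_def vv_neq0.
have : 0 <= \sum_k (u k * vv - v k * uv) ^+ 2 by apply: sumr_ge0 => k _; apply: sqr_ge0.
have -> : \sum_k (u k * vv - v k * uv) ^+ 2 = vv * (vv * uu - uv ^+ 2).
  have expand k : (u k * vv - v k * uv) ^+ 2
      = vv ^+ 2 * u k ^+ 2 - 2 * vv * uv * (u k * v k) + uv ^+ 2 * v k ^+ 2 by ring.
  under eq_bigr do rewrite expand.
  by rewrite big_split /= sumrB -!mulr_sumr -/uu -/vv -/uv; ring.
by rewrite (pmulr_rge0 _ vv_gt0) subr_ge0 mulrC.
Qed.

Section GramBound.
Variables (R : realType) (n m L : nat) (C : 'I_L -> 'M[R]_(n, m)) (lam : R).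
Local Notation Phi := (Phi_mx C).
Hypothesis rayleigh : forall x : 'rV[R]_L,
  (x *m (Phi^T *m Phi) *m x^T) 0 0 <= lam * (x *m x^T) 0 0.

Let row_sqr (x : 'rV[R]_L) : (x *m x^T) 0 0 = \sum_(l < L) x 0 l ^+ 2.
Proof. by rewrite mxE; apply: eq_bigr => l _; rewrite mxE expr2. Qed.

Let gram_quad (x : 'rV[R]_L) :
  (x *m (Phi^T *m Phi) *m x^T) 0 0 = \sum_(k < n * m) (Phi *m x^T) k 0 ^+ 2.
Proof.
rewrite mulmxA -[x *m Phi^T]trmxK trmx_mul trmxK -mulmxA mxE.
by apply: eq_bigr => k _; rewrite mxE expr2.
Qed.

Lemma gram_eigenvalue_ge0 : (0 < L)%N -> 0 <= lam.
Proof.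
move=> L_gt0; have := rayleigh (const_mx 1); rewrite gram_quad row_sqr.
under [X in _ <= _ * X]eq_bigr do rewrite mxE expr1n.
rewrite sumr_const card_ord => le_lam.
have L_pos : 0 < L%:R :> R by rewrite ltr0n.
rewrite -(pmulr_lge0 _ L_pos).
by apply: le_trans le_lam; apply: sumr_ge0 => k _; apply: sqr_ge0.
Qed.

(* With w := Phi^T vec V we have W = |w|^2 = <vec V, Phi w>, so Cauchy-Schwarz and
   the Rayleigh bound for w give W^2 <= |V|^2 * lam * W. *)
Lemma sum_frob_sqr_le (V : 'M[R]_(n, m)) : 0 <= lam ->
  \sum_(l < L) frob V (C l) ^+ 2 <= lam * frob V V.
Proof.
move=> lam_ge0.
set W := \sum_l _; set w : 'rV[R]_L := \row_l frob V (C l); set y := Phi *m w^T.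
have W_ge0 : 0 <= W by apply: sumr_ge0 => l _; apply: sqr_ge0.
have W_vy : W = \sum_(k < n * m) mxvec V 0 k * y k 0.
  under [RHS]eq_bigr do rewrite mxE mulr_sumr.
  rewrite exchange_big /=; apply: eq_bigr => l _.
  rewrite expr2 {1}frob_mxvec mulr_suml; apply: eq_bigr => k _.
  by rewrite !mxE mulrA.
have y_sqr : \sum_(k < n * m) y k 0 ^+ 2 <= lam * W.
  have := rayleigh w; rewrite gram_quad row_sqr.
  by under [X in _ <= _ * X -> _]eq_bigr do rewrite mxE.
have V_sqr : frob V V = \sum_(k < n * m) mxvec V 0 k ^+ 2.
  by rewrite frob_mxvec; apply: eq_bigr => k _; rewrite expr2.
have : W ^+ 2 <= frob V V * (lam * W).
  rewrite {1}W_vy V_sqr.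
  have CS := cauchy_schwarz (fun k => mxvec V 0 k) (fun k => y k 0).
  apply: (le_trans CS).
  by apply: ler_wpM2l => //; apply: sumr_ge0 => k _; apply: sqr_ge0.
have [->|W_neq0] := eqVneq W 0; first by rewrite mulr_ge0 ?frob_self_ge0.
have W_gt0 : 0 < W by rewrite lt_def W_neq0.
by rewrite expr2 mulrA [frob V V * lam]mulrC ler_pM2r.
Qed.

End GramBound.

Lemma ler0_is_derive_le (R : realType) (f df : R -> R) (a b : R) : a <= b ->
  (forall x : R, is_derive x 1 f (df x)) -> (forall x, a <= x <= b -> df x <= 0) ->
  f b <= f a.
Proof.
move=> le_ab f_df df_le0.
have f_cont := @derivable_within_continuous R R^o f `[a, b]%R
  (fun x _ => @ex_derive _ _ _ _ _ _ _ (f_df x)).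
have [c c_ab mvt] := MVT_segment le_ab (fun x _ => f_df x) f_cont.
rewrite -subr_le0 mvt mulr_le0_ge0 ?subr_ge0 //.
by apply: df_le0; rewrite in_itv /= in c_ab.
Qed.

Section LogSumExp.
Variables (R : realType) (L : nat).
Hypothesis L_gt0 : (0 < L)%N.
Implicit Types s u d : 'I_L -> R.

Definition lse s := ln (\sum_(l < L) expR (s l)).
Definition softmax s l := expR (s l) / \sum_(k < L) expR (s k).

Lemma sum_expR_gt0 s : 0 < \sum_(l < L) expR (s l).
Proof.
rewrite (bigD1 (Ordinal L_gt0)) //= ltr_pwDl ?expR_gt0 //.
by apply: sumr_ge0 => l _; apply: ltW; apply: expR_gt0.
Qed.

Lemma softmax_ge0 s l : 0 <= softmax s l.
Proof. by rewrite divr_ge0 // ltW ?expR_gt0 ?sum_expR_gt0. Qed.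

Lemma sum_softmax s : \sum_(l < L) softmax s l = 1.
Proof. by rewrite -mulr_suml divff // gt_eqF // sum_expR_gt0. Qed.

Lemma expR_mean_le (p y : 'I_L -> R) : (forall l, 0 <= p l) -> \sum_(l < L) p l = 1 ->
  expR (\sum_(l < L) p l * y l) <= \sum_(l < L) p l * expR (y l).
Proof.
move=> p_ge0 sum_p1; set ym := \sum_l _.
have tangent l : expR ym * (1 + (y l - ym)) <= expR (y l).
  rewrite -[in leRHS](subrK ym (y l)) expRD mulrC.
  by rewrite ler_wpM2r ?expR_ge1Dx // ltW ?expR_gt0.
apply: le_trans (ler_sum _ (fun l _ => ler_wpM2l (p_ge0 l) (tangent l))).
have -> : \sum_l p l * (expR ym * (1 + (y l - ym))) =
    expR ym * \sum_l (p l + (p l * y l - p l * ym)).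
  by rewrite mulr_sumr; apply: eq_bigr => l _; ring.
by rewrite big_split sumrB -mulr_suml sum_p1 -/ym /= mul1r subrr addr0 mulr1.
Qed.

Lemma lse_convex s u : lse s + \sum_(l < L) softmax s l * (u l - s l) <= lse u.
Proof.
have S_gt0 := sum_expR_gt0 s.
have mean_gt0 : 0 < \sum_(l < L) softmax s l * expR (u l - s l).
  apply: lt_le_trans (expR_mean_le (fun l => u l - s l) (softmax_ge0 s) (sum_softmax s)).
  exact: expR_gt0.
rewrite /lse; have -> : \sum_(l < L) expR (u l) =
    (\sum_(l < L) expR (s l)) * \sum_(l < L) softmax s l * expR (u l - s l).
  rewrite mulr_sumr; apply: eq_bigr => l _.
  by rewrite /softmax mulrA [_ * (_ / _)]mulrC divfK ?gt_eqF // -expRD subrKC.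
rewrite lnM ?posrE // lerD2l -ler_expR lnK ?posrE //.
exact: expR_mean_le _ (softmax_ge0 s) (sum_softmax s).
Qed.

(* [mean] is the derivative of [ln \o Z] and its own derivative is a variance,
   hence at most [K]; the mean value theorem, applied twice, gives the
   second-order bound. *)
Section Smoothness.
Variables s d : 'I_L -> R.

Let E l (g : R) := expR (s l + g * d l).
Let Z g := \sum_(l < L) E l g.
Let Z1 g := \sum_(l < L) E l g * d l.
Let Z2 g := \sum_(l < L) E l g * d l ^+ 2.
Let mean g := Z1 g / Z g.
Let K := \sum_(l < L) d l ^+ 2.

Let Z_gt0 g : 0 < Z g. Proof. exact: sum_expR_gt0. Qed.

Let Z_neq0 g : Z g != 0. Proof. exact: lt0r_neq0. Qed.

Let is_derive_E l (x : R) : is_derive x 1 (E l) (E l x * d l).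
Proof.
have -> : E l = expR \o (fun g => s l + g * d l) by [].
by apply: is_derive_eq; rewrite add0r mul1r scaler0 add0r /GRing.scale /= mulr1.
Qed.

Let is_derive_Z (x : R) : is_derive x 1 Z (Z1 x).
Proof.
have -> : Z = \sum_(l < L) E l by rewrite fct_sumE.
exact: is_derive_sum.
Qed.

Let is_derive_Z1 (x : R) : is_derive x 1 Z1 (Z2 x).
Proof.
have -> : Z1 = \sum_(l < L) (fun g => E l g * d l) by rewrite fct_sumE.
apply: is_derive_sum => l; apply: is_derive_eq.
by rewrite /E /GRing.scale /=; ring.
Qed.

Let is_derive_mean (x : R) : is_derive x 1 mean ((Z2 x * Z x - Z1 x ^+ 2) / Z x ^+ 2).
Proof.
have dV : is_derive x 1 (fun g => (Z g)^-1) (- (Z x) ^- 2 *: Z1 x).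
  exact: is_deriveV (Z_neq0 x) (is_derive_Z x).
have -> : mean = Z1 * (fun g => (Z g)^-1) by apply/funext => g.
apply: is_derive_eq; first exact: is_deriveM.
by rewrite /GRing.scale /=; field; exact: Z_neq0.
Qed.

Let variance_le x : (Z2 x * Z x - Z1 x ^+ 2) / Z x ^+ 2 <= K.
Proof.
have Z2_le : Z2 x <= K * Z x.
  rewrite /Z2 /K mulr_suml; apply: ler_sum => l _; rewrite mulrC ler_wpM2l ?sqr_ge0 //.
  rewrite /Z (bigD1 l) //= lerDl; apply: sumr_ge0 => k _; exact/ltW/expR_gt0.
rewrite ler_pdivrMr ?exprn_gt0 // expr2 mulrA.
have := ler_wpM2r (ltW (Z_gt0 x)) Z2_le; have := sqr_ge0 (Z1 x); lra.
Qed.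

Let mean_sub_le x : 0 <= x -> mean x - K * x <= mean 0.
Proof.
move=> x_ge0; have := @ler0_is_derive_le _ (fun g => mean g - K * g)
  (fun g => (Z2 g * Z g - Z1 g ^+ 2) / Z g ^+ 2 - K) 0 x x_ge0.
rewrite mulr0 subr0; apply=> [y|y _]; last by rewrite subr_le0.
have -> : (fun g => mean g - K * g) = mean - (fun g => K * g) by [].
apply: is_derive_eq; first by apply: is_deriveB; first exact: is_derive_mean.
by rewrite /GRing.scale /= mulr1.
Qed.

Lemma lse_smooth : lse (fun l => s l + d l) <=
  lse s + \sum_(l < L) softmax s l * d l + 2^-1 * \sum_(l < L) d l ^+ 2.
Proof.
pose psi g := ln (Z g) - g * mean 0 - 2^-1 * K * (g * g).
have is_derive_psi (y : R) : is_derive y 1 psi (mean y - mean 0 - K * y).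
  have -> : psi = ((@ln R) \o Z) - (fun g => g * mean 0) - (fun g => 2^-1 * K * (g * g)) by [].
  apply: is_derive_eq; first apply: is_deriveB; first apply: is_deriveB.
    by apply: is_derive1_comp; [exact: is_derive1_ln (Z_gt0 y) | exact: is_derive_Z].
  by rewrite /GRing.scale /= /mean; field; rewrite !Z_neq0.
have psi'_le0 y : 0 <= y <= 1 -> mean y - mean 0 - K * y <= 0.
  by case/andP=> y_ge0 _; have := mean_sub_le y_ge0; lra.
have := ler0_is_derive_le ler01 is_derive_psi psi'_le0.
have Z1_eq : Z 1 = \sum_(l < L) expR (s l + d l) by apply: eq_bigr => l _; rewrite /E mul1r.
have Z0 : Z 0 = \sum_(l < L) expR (s l) by apply: eq_bigr => l _; rewrite /E mul0r addr0.
have mean0 : mean 0 = \sum_(l < L) softmax s l * d l.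
  rewrite /mean Z0 /Z1 mulr_suml; apply: eq_bigr => l _.
  by rewrite /E /softmax mul0r addr0 mulrAC.
rewrite /psi Z1_eq Z0 mean0 /lse !mul1r !mul0r !subr0 mulr1 /K; lra.
Qed.

End Smoothness.

End LogSumExp.

Section SoftmaxObjective.
Variables (R : realType) (n m L : nat) (eta : R) (C : 'I_L -> 'M[R]_(n, m)).
Hypotheses (eta_gt0 : 0 < eta) (L_gt0 : (0 < L)%N).
Local Notation G := (G_eta eta C).
Local Notation M := (M_grad eta C).
Local Notation scores P := (fun l => frob P (C l) / eta).

Lemma frob_M_grad P Q :
  frob Q (M P) = \sum_(l < L) softmax (scores P) l * frob Q (C l).
Proof. exact: frob_sumr. Qed.

Lemma G_eta_convex P Q : G P + frob (Q - P) (M P) <= G Q.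
Proof.
have := ler_wpM2l (ltW eta_gt0) (lse_convex L_gt0 (scores P) (scores Q)).
rewrite mulrDr frob_M_grad mulr_sumr; congr (_ + _ <= _); apply: eq_bigr => l _.
by rewrite frobBl mulrCA -mulrBl; congr (_ * _); field; rewrite gt_eqF.
Qed.

Lemma G_eta_smooth P Q :
  G Q <= G P + frob (Q - P) (M P) + 2^-1 / eta * \sum_(l < L) frob (Q - P) (C l) ^+ 2.
Proof.
have := ler_wpM2l (ltW eta_gt0)
  (lse_smooth L_gt0 (scores P) (fun l => (frob Q (C l) - frob P (C l)) / eta)).
have -> : (fun l => frob P (C l) / eta + (frob Q (C l) - frob P (C l)) / eta) = scores Q.
  by apply/funext => l; rewrite -mulrDl addrC subrK.
move/le_trans; apply; rewrite le_eqVlt; apply/orP; left; apply/eqP.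
rewrite !mulrDr frob_M_grad !mulr_sumr; congr (_ + _ + _); apply: eq_bigr => l _;
  by rewrite frobBl; field; rewrite gt_eqF.
Qed.

End SoftmaxObjective.

Section TransportPolytope.
Variables (R : realType) (n m : nat) (a : 'cV[R]_n) (b : 'cV[R]_m).
Local Notation D := (transport_polytope a b).

Lemma transport_polytope_convex P Q g : D P -> D Q -> 0 <= g <= 1 ->
  D ((1 - g) *: P + g *: Q).
Proof.
move=> [P_ge0 [Pa Pb]] [Q_ge0 [Qa Qb]] /andP[g_ge0 g_le1]; split; last split.
- move=> i j; rewrite !mxE addr_ge0 // mulr_ge0 ?subr_ge0 //.
- by rewrite mulmxDl -!scalemxAl Pa Qa -scalerDl subrK scale1r.
- by rewrite linearD /= !linearZ /= mulmxDl -!scalemxAl Pb Qb -scalerDl subrK scale1r.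
Qed.

Hypothesis sum_a1 : \sum_(i < n) a i 0 = 1.

Lemma transport_polytope_sum P : D P -> \sum_(i < n) \sum_(j < m) P i j = 1.
Proof.
move=> [_ [Pa _]]; rewrite -sum_a1; apply: eq_bigr => i _.
by rewrite -Pa mxE; apply: eq_bigr => j _; rewrite mxE mulr1.
Qed.

Lemma transport_polytope_le1 P i j : D P -> P i j <= 1.
Proof.
move=> DP; have [P_ge0 _] := DP; rewrite -(transport_polytope_sum DP).
apply: (@le_trans _ _ (\sum_(k < m) P i k)).
  by rewrite (bigD1 j) //= lerDl sumr_ge0.
by rewrite (bigD1 i) //= lerDl sumr_ge0 // => k _; apply: sumr_ge0.
Qed.

Lemma transport_polytope_diam P Q : D P -> D Q -> frob (Q - P) (Q - P) <= 2.
Proof.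
move=> DP DQ; rewrite -[2]/(1 + 1) -{1}(transport_polytope_sum DP).
rewrite -{1}(transport_polytope_sum DQ) -big_split; apply: ler_sum => i _.
rewrite -big_split; apply: ler_sum => j _ /=; rewrite !mxE.
have := transport_polytope_le1 i j DP; have := transport_polytope_le1 i j DQ.
have := DP.1 i j; have := DQ.1 i j; nra.
Qed.

End TransportPolytope.

Section Curvature.
Local Open Scope classical_set_scope.
Variables (R : realType) (n m L : nat) (eta : R) (C : 'I_L -> 'M[R]_(n, m)).
Variable D : set 'M[R]_(n, m).
Local Notation G := (G_eta eta C).
Local Notation M := (M_grad eta C).

Definition curvature_set : set R :=
  [set x : R | exists P Ph (g : R), [/\ D P, D Ph, 0 < g, g <= 1 &
     x = 2 / g ^+ 2 * (G (P + g *: (Ph - P)) - G P - frob (P + g *: (Ph - P) - P) (M P))]].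

Lemma curvature_constE : curvature_const eta C D = sup curvature_set.
Proof. by []. Qed.

Lemma curvature_set_le_diam (lam d : R) : 0 < eta -> (0 < L)%N -> 0 <= lam ->
  (forall V, \sum_(l < L) frob V (C l) ^+ 2 <= lam * frob V V) ->
  (forall P Q, D P -> D Q -> frob (Q - P) (Q - P) <= d) ->
  forall x, curvature_set x -> x <= lam * d / eta.
Proof.
move=> eta_gt0 L_gt0 lam_ge0 gram diam _ [P [Ph [g [DP DPh g_gt0 _ ->]]]].
have := G_eta_smooth C eta_gt0 L_gt0 P (P + g *: (Ph - P)).
rewrite [P + _]addrC addrK; under eq_bigr do rewrite frobZl exprMn.
rewrite -mulr_sumr frobZl => smooth.
have := gram (Ph - P); have := diam _ _ DP DPh.
set S := \sum_(l < L) _ in smooth *; set V2 := frob _ _ => V2_le S_le.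
have g2_gt0 : 0 < g ^+ 2 by rewrite exprn_gt0.
have S_le' : g ^+ 2 * (S / eta) <= g ^+ 2 * (lam * d / eta).
  apply: ler_wpM2l; first exact: ltW.
  apply: ler_wpM2r; first by rewrite invr_ge0 ltW.
  exact: le_trans S_le (ler_wpM2l lam_ge0 V2_le).
rewrite (_ : 2^-1 / eta * _ = 2^-1 * (g ^+ 2 * (S / eta))) in smooth; last by ring.
rewrite -(ler_pM2l g2_gt0) mulrA mulrCA divff ?gt_eqF // mulr1; lra.
Qed.

Variables (K : R) (P0 : 'M[R]_(n, m)).
Hypotheses (D_P0 : D P0) (curvature_set_ub : forall x, curvature_set x -> x <= K).

Let curvature_set0 : curvature_set 0.
Proof.
exists P0, P0, 1; split => //.
have frob0l : frob (0 : 'M[R]_(n, m)) (M P0) = 0.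
  by rewrite /frob big1 // => i _; rewrite big1 // => j _; rewrite mxE mul0r.
by rewrite subrr scaler0 addr0 !subrr frob0l subrr mulr0.
Qed.

Let curvature_set_has_sup : has_sup curvature_set.
Proof. by split; [exists 0 | exists K]. Qed.

Lemma curvature_const_le : curvature_const eta C D <= K.
Proof. by apply: ge_sup; [exists 0 | exact: curvature_set_ub]. Qed.

Lemma curvature_const_ge0 : 0 <= curvature_const eta C D.
Proof. exact: sup_upper_bound curvature_set_has_sup _ curvature_set0. Qed.

Lemma curvature_descent P Ph g : D P -> D Ph -> 0 < g -> g <= 1 ->
  G (P + g *: (Ph - P)) <=
  G P + g * frob (Ph - P) (M P) + g ^+ 2 / 2 * curvature_const eta C D.
Proof.
move=> DP DPh g_gt0 g_le1.
have /(sup_upper_bound curvature_set_has_sup) : curvature_set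
    (2 / g ^+ 2 * (G (P + g *: (Ph - P)) - G P - frob (P + g *: (Ph - P) - P) (M P))).
  by exists P, Ph, g.
rewrite -curvature_constE [P + _]addrC addrK frobZl.
set gap := G _ - G P - _ => gap_le.
have g2_ge0 : 0 <= g ^+ 2 / 2 by rewrite divr_ge0 ?sqr_ge0.
have := ler_wpM2l g2_ge0 gap_le.
rewrite (_ : g ^+ 2 / 2 * (2 / g ^+ 2 * gap) = gap) /gap; first lra.
by field; rewrite gt_eqF.
Qed.

End Curvature.

Section FrankWolfeStep.
Variables (R : realType) (n m : nat) (D : set 'M[R]_(n, m)).
Variables (f : 'M[R]_(n, m) -> R) (grad : 'M[R]_(n, m) -> 'M[R]_(n, m)) (Cf : R).
Hypothesis f_convex : forall P Q, D P -> D Q -> f P + frob (Q - P) (grad P) <= f Q.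
Hypothesis f_curvature : forall P Q g, D P -> D Q -> 0 < g -> g <= 1 ->
  f (P + g *: (Q - P)) <= f P + g * frob (Q - P) (grad P) + g ^+ 2 / 2 * Cf.

Lemma frank_wolfe_step P Pstar Ph g delta : D P -> D Pstar -> D Ph -> 0 < g -> g <= 1 ->
  frob Ph (grad P) <= frob Pstar (grad P) + 2^-1 * delta * g * Cf ->
  f ((1 - g) *: P + g *: Ph) - f Pstar <=
  (1 - g) * (f P - f Pstar) + g ^+ 2 / 2 * (Cf * (1 + delta)).
Proof.
move=> DP DPstar DPh g_gt0 g_le1 oracle.
have -> : (1 - g) *: P + g *: Ph = P + g *: (Ph - P).
  by rewrite scalerBl scale1r scalerBr addrAC -addrA.
have := f_curvature DP DPh g_gt0 g_le1.
have := ler_wpM2l (ltW g_gt0) (f_convex DP DPstar).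
have := ler_wpM2l (ltW g_gt0) oracle; rewrite !frobBl; lra.
Qed.

End FrankWolfeStep.

Lemma stepsize_gt0 (R : realFieldType) (t : nat) : 0 < 2 / (t%:R + 2) :> R.
Proof. by rewrite divr_gt0 // ltr_wpDl. Qed.

Lemma stepsize_le1 (R : realFieldType) (t : nat) : 2 / (t%:R + 2) <= 1 :> R.
Proof. by rewrite ler_pdivrMr ?ltr_wpDl // mul1r lerDr. Qed.

Lemma frank_wolfe_rate (R : realFieldType) (h : nat -> R) (c : R) : 0 <= c ->
  (forall t : nat, h t.+1 <= (1 - 2 / (t%:R + 2)) * h t + (2 / (t%:R + 2)) ^+ 2 / 2 * c) ->
  forall t, (1 <= t)%N -> h t <= 2 * c / (t%:R + 2).
Proof.
move=> c_ge0 h_rec; elim=> [//|[_ _|t IH _]].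
  apply: le_trans (h_rec 0%N) _.
  rewrite add0r divff // subrr mul0r add0r expr1n (_ : 1 + 2 = 3 :> R); by [lra | ring].
apply: le_trans (h_rec t.+1) _; have {IH} := IH isT.
rewrite -[t.+2%:R]natr1; set x := t.+1%:R => IH.
have x2_gt0 : 0 < x + 2 by rewrite ltr_wpDl ?ler0n.
have weight_ge0 : 0 <= 1 - 2 / (x + 2) by rewrite subr_ge0 stepsize_le1.
apply: le_trans (lerD (ler_wpM2l weight_ge0 IH) (lexx _)) _.
rewrite -subr_ge0 (_ : _ - _ = 2 * c / ((x + 1 + 2) * (x + 2) ^+ 2)).
  by rewrite divr_ge0 ?mulr_ge0 ?exprn_ge0 ?addr_ge0 ?ler0n // ltW.
by field; rewrite !gt_eqF // ltr_wpDl // addr_ge0 ?ler0n.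
Qed.

Theorem proposition3 (R : realType) (n m L : nat) (eta delta : R)
  (a : 'cV[R]_n) (b : 'cV[R]_m) (C : 'I_L -> 'M[R]_(n, m))
  (Pstar : 'M[R]_(n, m)) (Pi : nat -> 'M[R]_(n, m)) (lam : R) :
  0 < eta -> (0 < L)%N -> 0 <= delta ->
  (forall i, 0 <= a i 0) -> (forall j, 0 <= b j 0) ->
  \sum_(i < n) a i 0 = 1 -> \sum_(j < m) b j 0 = 1 ->
  transport_polytope a b Pstar ->
  (forall P, transport_polytope a b P -> G_eta eta C Pstar <= G_eta eta C P) ->
  transport_polytope a b (Pi 0%N) ->
  (forall t : nat, exists Ph : 'M[R]_(n, m),
      [/\ transport_polytope a b Ph,
          (forall P, transport_polytope a b P ->
             frob Ph (M_grad eta C (Pi t)) <=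
             frob P (M_grad eta C (Pi t))
             + 2^-1 * delta * (2 / (t%:R + 2)) * curvature_const eta C (transport_polytope a b))
        & Pi t.+1 = (1 - 2 / (t%:R + 2)) *: Pi t + (2 / (t%:R + 2)) *: Ph]) ->
  largest_eigenvalue ((Phi_mx C)^T *m Phi_mx C) lam ->
  forall t : nat, (1 <= t)%N ->
    G_eta eta C (Pi t) - G_eta eta C Pstar <= 4 * lam / (eta * (t%:R + 2)) * (1 + delta).
Proof.
move=> eta_gt0 L_gt0 delta_ge0 _ _ sum_a1 _ D_Pstar _ D_Pi0 fw_iter [_ lam_max] t t_ge1.
set D := transport_polytope a b; set Cf := curvature_const eta C D.
have gram_sym : ((Phi_mx C)^T *m Phi_mx C)^T = (Phi_mx C)^T *m Phi_mx C.
  by rewrite trmx_mul trmxK.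
have rayleigh := rayleigh_le gram_sym lam_max.
have lam_ge0 := gram_eigenvalue_ge0 rayleigh L_gt0.
have Cf_set_ub := curvature_set_le_diam eta_gt0 L_gt0 lam_ge0
  (sum_frob_sqr_le rayleigh ^~ lam_ge0) (transport_polytope_diam (b := b) sum_a1).
have D_Pi : forall t, D (Pi t).
  elim=> [//|s D_Pis]; have [Ph [D_Ph _ ->]] := fw_iter s.
  by apply: transport_polytope_convex; rewrite ?(ltW (stepsize_gt0 _ _)) ?stepsize_le1.
have h_rec s : G_eta eta C (Pi s.+1) - G_eta eta C Pstar <=
    (1 - 2 / (s%:R + 2)) * (G_eta eta C (Pi s) - G_eta eta C Pstar)
    + (2 / (s%:R + 2)) ^+ 2 / 2 * (Cf * (1 + delta)).
  have [Ph [D_Ph oracle ->]] := fw_iter s.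
  apply: (frank_wolfe_step (D := D) (fun P Q _ _ => G_eta_convex C eta_gt0 L_gt0 P Q)
    (curvature_descent D_Pstar Cf_set_ub)) => //;
    by [exact: stepsize_gt0 | exact: stepsize_le1 | exact: oracle].
have Cf_ge0 := curvature_const_ge0 D_Pstar Cf_set_ub.
have Cf_delta_ge0 : 0 <= Cf * (1 + delta) by rewrite mulr_ge0 ?addr_ge0.
apply: le_trans (frank_wolfe_rate (h := fun s => G_eta eta C (Pi s) - G_eta eta C Pstar)
  Cf_delta_ge0 h_rec t_ge1) _.
have t2_gt0 : 0 < t%:R + 2 :> R by rewrite ltr_wpDl.
rewrite (_ : 4 * lam / _ * _ = 2 * (lam * 2 / eta * (1 + delta)) / (t%:R + 2)); last first.
  by field; rewrite !gt_eqF.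
rewrite ler_pM2r ?invr_gt0 // ler_pM2l //; apply: ler_wpM2r; first exact: addr_ge0.
exact: curvature_const_le D_Pstar Cf_set_ub.
Qed.
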